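(* Let $M,N>0$. Define $a^{(m)}=a^{(m)}(M,N)$ by $a^{(0)}=M$ and, for $m\ge1$, $$a^{(m)}=N\sum_{\substack{0\le p_1,p_2,p_3<m\\ \sum p_i=m}}\binom{m}{p_1,p_2,p_3}\prod_{i=1}^3a^{(p_i)}+Nm\sum_{\substack{q_1,\dots,q_4\ge0\\ \sum q_i=m-1}}\binom{m-1}{q_1,\dots,q_4}\prod_{i=1}^4a^{(q_i)}+\frac{N}{m+1}\sum_{\substack{0\le r_1,\dots,r_6<m\\ \sum r_i=m+1}}\binom{m+1}{r_1,\dots,r_6}\prod_{i=1}^6a^{(r_i)}.$$ Then $\sum_{m=0}^\infty a^{(m)}t^m/m!$ converges in a neighborhood of $t=0$, and its sum is, in a neighborhood of $a=M$, the inverse function of $$t(a)=\frac{(a-M)\left(p(a)+\sqrt{p(a)^2-4N^2\left(a^4+15M^{12}N^2\right)\left(a^4+2a^3M+3a^2M^2+4aM^3+5M^4\right)}\right)}{2\left(a^4N+15M^{12}N^3\right)},$$ where $p(a)=1-(a-M)(a+2M)N+30M^8N^2$. *)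

From Stdlib Require Import Reals List Arith.
From Coquelicot Require Import Coquelicot.
Import ListNotations.
Open Scope R_scope.

Fixpoint comps (k m : nat) : list (list nat) :=
  match k with
  | O => if Nat.eqb m 0 then [[]] else []
  | S k' => flat_map (fun i => map (cons i) (comps k' (m - i))) (List.seq 0 (S m))
  end.

Definition lsum {A} (f : A -> R) (l : list A) : R :=
  fold_right (fun x s => f x + s) 0 l.

Definition lprod (f : nat -> R) (l : list nat) : R :=
  fold_right (fun x s => f x * s) 1 l.

Definition multinom (n : nat) (l : list nat) : R :=
  INR (fact n) / lprod (fun p => INR (fact p)) l.

Definition all_lt (m : nat) (l : list nat) : bool := forallb (fun p => Nat.ltb p m) l.

Definition step (N : R) (f : nat -> R) (m : nat) : R :=
  N * lsum (fun l => multinom m l * lprod f l) (filter (all_lt m) (comps 3 m))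
  + N * INR m * lsum (fun l => multinom (m - 1) l * lprod f l) (comps 4 (m - 1))
  + N / INR (m + 1) *
      lsum (fun l => multinom (m + 1) l * lprod f l) (filter (all_lt m) (comps 6 (m + 1))).

Fixpoint aupto (M N : R) (n : nat) : list R :=
  match n with
  | O => [M]
  | S n' => let l := aupto M N n' in l ++ [step N (fun i => nth i l 0) (S n')]
  end.

Definition aseq (M N : R) (m : nat) : R := nth m (aupto M N m) 0.

Definition acoef (M N : R) (m : nat) : R := aseq M N m / INR (fact m).

Definition pfun (M N a : R) : R := 1 - (a - M) * (a + 2 * M) * N + 30 * M ^ 8 * N ^ 2.

Definition tfun (M N a : R) : R :=
  (a - M) * (pfun M N a +
     sqrt (pfun M N a ^ 2 - 4 * N ^ 2 * (a ^ 4 + 15 * M ^ 12 * N ^ 2)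
            * (a ^ 4 + 2 * a ^ 3 * M + 3 * a ^ 2 * M ^ 2 + 4 * a * M ^ 3 + 5 * M ^ 4)))
  / (2 * (a ^ 4 * N + 15 * M ^ 12 * N ^ 3)).

Goal comps 2 2 = [[0;2];[1;1];[2;0]]%nat. reflexivity. Qed.

From Stdlib Require Import Reals Lra Lia List Arith.
From Coquelicot Require Import Coquelicot.
Open Scope R_scope.

(* Write the generating function as S(t) = M + t (a1 + t W(t)) with a1 = a^(1) = N M^4.
   The recurrence says that the coefficients of W satisfy W = Phi(t, W) for a polynomial
   Phi with nonnegative coefficients in which W only occurs multiplied by t; coefficientwise,
   this follows from a polynomial identity and the identity theorem for power series.
   Nonnegativity and a majorant argument give W a positive radius of convergence.
   Multiplied by t, the fixed-point equation says that Y = (S(t) - M) / t is a root of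
   N q(a) Y^2 - p(a) Y + D(a) at a = S(t), where D(a) = a^4 N + 15 M^12 N^3; near t = 0 it is
   the root selected by the formula for t(a), so t(S(t)) = t, and the intermediate value
   theorem turns this left inverse into a two-sided local inverse. *)

Definition ps_const (c : R) : nat -> R := fun n => match n with O => c | _ => 0 end.

Definition ps_X : nat -> R := fun n => match n with 1%nat => 1 | _ => 0 end.

Fixpoint ps_pow (a : nat -> R) (k : nat) : nat -> R :=
  match k with O => ps_const 1 | S k => PS_mult a (ps_pow a k) end.

Definition trunc (m : nat) (a : nat -> R) : nat -> R :=
  fun j => if Nat.ltb j m then a j else 0.

Lemma trunc_ge m a j : (m <= j)%nat -> trunc m a j = 0.
Proof. intros Hj; unfold trunc; destruct (Nat.ltb_spec j m); [lia | reflexivity]. Qed.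

Lemma trunc_lt m a j : (j < m)%nat -> trunc m a j = a j.
Proof. intros Hj; unfold trunc; destruct (Nat.ltb_spec j m); [reflexivity | lia]. Qed.

Lemma PS_mult_const_l c a n : PS_mult (ps_const c) a n = c * a n.
Proof.
  assert (H : forall k, sum_f_R0 (fun i => ps_const c i * a (n - i)%nat) k = c * a n).
  { induction k as [|k IH]; simpl; [now rewrite Nat.sub_0_r | rewrite IH; ring]. }
  apply H.
Qed.

Lemma PS_mult_X_l a n : PS_mult ps_X a n = match n with O => 0 | S k => a k end.
Proof.
  assert (H : forall k, sum_f_R0 (fun i => ps_X i * a (n - i)%nat) k =
                        match k with O => 0 | S _ => a (n - 1)%nat end).
  { induction k as [|k IH]; simpl; [ring|rewrite IH; destruct k; simpl; ring]. }
  unfold PS_mult; rewrite H; destruct n; [reflexivity|].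
  now rewrite Nat.sub_succ, Nat.sub_0_r.
Qed.

Lemma PS_mult_X_l_S a n : PS_mult ps_X a (S n) = a n.
Proof. apply PS_mult_X_l. Qed.

Lemma PS_plus_R (a b : nat -> R) n : PS_plus a b n = a n + b n.
Proof. reflexivity. Qed.

Lemma PS_mult_local a a' b b' n :
  (forall j, (j <= n)%nat -> a j = a' j) -> (forall j, (j <= n)%nat -> b j = b' j) ->
  PS_mult a b n = PS_mult a' b' n.
Proof.
  intros Ha Hb; unfold PS_mult; apply sum_eq; intros i Hi.
  now rewrite Ha, Hb by lia.
Qed.

Lemma ps_pow_local a b n :
  (forall j, (j <= n)%nat -> a j = b j) -> forall k j, (j <= n)%nat -> ps_pow a k j = ps_pow b k j.
Proof.
  intros H k; induction k as [|k IH]; intros j Hj; [reflexivity|].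
  apply PS_mult_local; intros; [apply H | apply IH]; lia.
Qed.

Lemma ps_pow_ext a b : (forall j, a j = b j) -> forall k n, ps_pow a k n = ps_pow b k n.
Proof. intros H k n; apply (ps_pow_local _ _ n); auto. Qed.

Lemma ps_pow_const c k n : ps_pow (ps_const c) k n = ps_const (c ^ k) n.
Proof.
  revert n; induction k as [|k IH]; intros n; [reflexivity|].
  simpl ps_pow; rewrite PS_mult_const_l, IH; destruct n; simpl; ring.
Qed.

Lemma PS_mult_nonneg a b n :
  (forall j, 0 <= a j) -> (forall j, 0 <= b j) -> 0 <= PS_mult a b n.
Proof. intros Ha Hb; apply cond_pos_sum; intros k; now apply Rmult_le_pos. Qed.

Lemma lsum_app {A} (f : A -> R) l1 l2 : lsum f (l1 ++ l2) = lsum f l1 + lsum f l2.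
Proof. induction l1 as [|x l IH]; simpl; [ring | unfold lsum in *; simpl; rewrite IH; ring]. Qed.

Lemma lsum_flat_map {A B} (f : B -> R) (g : A -> list B) l :
  lsum f (flat_map g l) = lsum (fun x => lsum f (g x)) l.
Proof. induction l as [|x l IH]; [reflexivity | cbn [flat_map]; now rewrite lsum_app, IH]. Qed.

Lemma lsum_map {A B} (f : B -> R) (g : A -> B) l : lsum f (map g l) = lsum (fun x => f (g x)) l.
Proof.
  induction l as [|x l IH]; [reflexivity | simpl; unfold lsum in *; simpl; now rewrite IH].
Qed.

Lemma lsum_scal {A} (f : A -> R) c l : lsum (fun x => c * f x) l = c * lsum f l.
Proof. induction l as [|x l IH]; unfold lsum in *; simpl; [ring | rewrite IH; ring]. Qed.

Lemma lsum_ext {A} (f g : A -> R) l : (forall x, In x l -> f x = g x) -> lsum f l = lsum g l.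
Proof.
  induction l as [|x l IH]; intros H; [reflexivity|].
  unfold lsum in *; simpl; rewrite H by now left.
  now rewrite IH by (intros y Hy; apply H; now right).
Qed.

Lemma lsum_seq (F : nat -> R) n : lsum F (List.seq 0 (S n)) = sum_f_R0 F n.
Proof.
  induction n as [|n IH]; [unfold lsum; simpl; ring|].
  rewrite seq_S, lsum_app, IH; unfold lsum; simpl; ring.
Qed.

Lemma lsum_comps g k n : lsum (lprod g) (comps k n) = ps_pow g k n.
Proof.
  revert n; induction k as [|k IH]; intros n.
  - destruct n; unfold lsum, lprod; simpl; ring.
  - cbn [comps ps_pow]; rewrite lsum_flat_map; unfold PS_mult.
    rewrite <- lsum_seq; apply lsum_ext; intros i _.
    now rewrite lsum_map, <- IH, <- lsum_scal.
Qed.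

Lemma lprod_trunc_all_lt g m l : lprod (trunc m g) l = if all_lt m l then lprod g l else 0.
Proof.
  induction l as [|p l IH]; [reflexivity|].
  unfold lprod in *; simpl; rewrite IH; unfold trunc.
  destruct (Nat.ltb p m), (all_lt m l); simpl; ring.
Qed.

Lemma lsum_filter_all_lt g m L :
  lsum (lprod g) (filter (all_lt m) L) = lsum (lprod (trunc m g)) L.
Proof.
  induction L as [|l L IH]; [reflexivity|].
  simpl; rewrite lprod_trunc_all_lt.
  destruct (all_lt m l); unfold lsum in *; simpl; rewrite IH; ring.
Qed.

Lemma INR_fact_neq0 n : INR (fact n) <> 0.
Proof. apply not_0_INR, fact_neq_0. Qed.

Lemma lprod_fact_neq0 l : lprod (fun p => INR (fact p)) l <> 0.
Proof.
  induction l as [|p l IH]; unfold lprod in *; simpl; [lra|].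
  apply Rmult_integral_contrapositive; split; [apply INR_fact_neq0 | exact IH].
Qed.

Lemma lsum_multinom n f L :
  lsum (fun l => multinom n l * lprod f l) L =
  INR (fact n) * lsum (lprod (fun p => f p / INR (fact p))) L.
Proof.
  rewrite <- lsum_scal; apply lsum_ext; intros l _; unfold multinom.
  assert (E : lprod (fun p => f p / INR (fact p)) l =
              lprod f l / lprod (fun p => INR (fact p)) l).
  { induction l as [|p l IH]; unfold lprod in *; simpl; [field|].
    rewrite IH; field; split; [apply lprod_fact_neq0 | apply INR_fact_neq0]. }
  rewrite E; field; apply lprod_fact_neq0.
Qed.

Lemma length_aupto M N n : length (aupto M N n) = S n.
Proof. induction n as [|n IH]; simpl; [reflexivity | rewrite length_app, IH; simpl; lia]. Qed.

Lemma nth_aupto M N n i : (i <= n)%nat -> nth i (aupto M N n) 0 = aseq M N i.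
Proof.
  induction n as [|n IH]; intros Hi.
  - now replace i with 0%nat by lia.
  - destruct (Nat.eq_dec i (S n)) as [->|Hne]; [reflexivity|].
    simpl; rewrite app_nth1 by (rewrite length_aupto; lia); apply IH; lia.
Qed.

Lemma aseq_S M N n : aseq M N (S n) = step N (fun i => nth i (aupto M N n) 0) (S n).
Proof.
  unfold aseq at 1; simpl.
  rewrite app_nth2; rewrite length_aupto; [now rewrite Nat.sub_diag | lia].
Qed.

Lemma acoef_0 M N : acoef M N 0 = M.
Proof. unfold acoef, aseq; simpl; field. Qed.

Lemma acoef_S M N n :
  let c := trunc (S n) (acoef M N) in
  acoef M N (S n) = N * ps_pow c 3 (S n) + N * ps_pow c 4 n + N * ps_pow c 6 (S (S n)).
Proof.
  intros c; unfold acoef at 1; rewrite aseq_S; unfold step.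
  rewrite !lsum_multinom, !lsum_filter_all_lt, !lsum_comps.
  set (g := fun p => nth p (aupto M N n) 0 / INR (fact p)).
  assert (Hg : forall j, trunc (S n) g j = c j).
  { intros j; unfold c, trunc, g, acoef; destruct (Nat.ltb_spec j (S n)); [|reflexivity].
    rewrite nth_aupto by lia; reflexivity. }
  pose proof (ps_pow_ext _ _ Hg) as Hpow.
  assert (H4 : ps_pow g 4 n = ps_pow c 4 n).
  { rewrite <- Hpow; apply (ps_pow_local _ _ n); [|lia].
    intros j Hj; now rewrite trunc_lt by lia. }
  rewrite Nat.sub_succ, Nat.sub_0_r, Nat.add_1_r, !Hpow, H4, !fact_simpl, !mult_INR, !S_INR.
  pose proof (INR_fact_neq0 n); pose proof (pos_INR n).
  field; repeat split; lra.
Qed.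

Definition a1 (M N : R) : R := N * M ^ 4.

Lemma acoef_1 M N : acoef M N 1 = a1 M N.
Proof.
  rewrite acoef_S.
  assert (H : forall j, trunc 1 (acoef M N) j = ps_const M j).
  { intros [|j]; [apply acoef_0 | reflexivity]. }
  rewrite !(ps_pow_ext _ _ H), !ps_pow_const.
  unfold a1; simpl; ring.
Qed.

Lemma is_series_finite a L :
  (forall n, (L < n)%nat -> a n = 0) -> is_series a (sum_f_R0 a L).
Proof.
  intros H; apply (filterlim_ext_loc (fun _ => sum_f_R0 a L)); [|apply filterlim_const].
  exists L; intros n Hn; rewrite sum_n_Reals.
  induction Hn as [|n Hn IH]; [reflexivity|].
  simpl; rewrite <- IH, H by lia; ring.
Qed.

Lemma PSeries_finite a L x :
  (forall n, (L < n)%nat -> a n = 0) -> PSeries a x = sum_f_R0 (fun n => a n * x ^ n) L.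
Proof.
  intros H; apply is_series_unique, is_series_finite.
  intros n Hn; rewrite H by exact Hn; ring.
Qed.

Lemma radius_ge_of_ex_series a x :
  ex_series (fun n => a n * x ^ n) -> Rbar_le (Rabs x) (CV_radius a).
Proof.
  intros H; apply ex_series_lim_0 in H.
  destruct (filterlim_bounded (fun n => a n * x ^ n)) as [B HB]; [now exists 0|].
  apply (proj1 (CV_radius_bounded a)); exists B; intros n.
  rewrite RPow_abs, Rabs_mult, Rabs_Rabsolu, <- Rabs_mult; apply HB.
Qed.

Lemma radius_ge_of_inside (rho : R) a :
  (forall x, 0 <= x < rho -> ex_series (fun n => a n * x ^ n)) -> Rbar_le rho (CV_radius a).
Proof.
  intros H; apply Rbar_not_lt_le; intros Hlt.
  pose proof (CV_radius_ge_0 a) as H0.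
  destruct (CV_radius a) as [r| |] eqn:E; simpl in Hlt, H0; try contradiction.
  assert (Hx : 0 <= (r + rho) / 2 < rho) by lra.
  pose proof (radius_ge_of_ex_series a _ (H _ Hx)) as Hr.
  rewrite E, Rabs_pos_eq in Hr by lra; simpl in Hr; lra.
Qed.

Lemma radius_lt (rho : R) a x :
  Rbar_le rho (CV_radius a) -> Rabs x < rho -> Rbar_lt (Rabs x) (CV_radius a).
Proof. intros Ha Hx; exact (Rbar_lt_le_trans (Rabs x) rho _ Hx Ha). Qed.

Lemma radius_ge_finite (rho : R) a L :
  (forall n, (L < n)%nat -> a n = 0) -> Rbar_le rho (CV_radius a).
Proof.
  intros H; apply radius_ge_of_inside; intros x _.
  eexists; apply is_series_finite; intros n Hn; rewrite H by exact Hn; ring.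
Qed.

Lemma radius_ge_plus (rho : R) a b :
  Rbar_le rho (CV_radius a) -> Rbar_le rho (CV_radius b) -> Rbar_le rho (CV_radius (PS_plus a b)).
Proof.
  intros Ha Hb; apply radius_ge_of_inside; intros x Hx.
  apply ex_pseries_R, ex_pseries_plus; apply CV_radius_inside;
    apply (radius_lt rho); auto; rewrite Rabs_pos_eq; lra.
Qed.

Lemma radius_ge_mult (rho : R) a b :
  Rbar_le rho (CV_radius a) -> Rbar_le rho (CV_radius b) -> Rbar_le rho (CV_radius (PS_mult a b)).
Proof.
  intros Ha Hb; apply radius_ge_of_inside; intros x Hx.
  apply ex_pseries_R, ex_pseries_mult; apply (radius_lt rho); auto; rewrite Rabs_pos_eq; lra.
Qed.

Lemma PSeries_trunc a n x : PSeries (trunc (S n) a) x = sum_f_R0 (fun j => a j * x ^ j) n.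
Proof.
  rewrite (PSeries_finite _ n) by (intros j Hj; apply trunc_ge; lia).
  apply sum_eq; intros j Hj; now rewrite trunc_lt by lia.
Qed.

Lemma trunc_nonneg m a : (forall j, 0 <= a j) -> forall j, 0 <= trunc m a j.
Proof. intros Ha j; unfold trunc; destruct (Nat.ltb j m); [apply Ha | lra]. Qed.

Lemma radius_trunc (rho : R) m a : Rbar_le rho (CV_radius (trunc m a)).
Proof. apply (radius_ge_finite _ _ m); intros j Hj; apply trunc_ge; lia. Qed.

Lemma partial_sum_le_Series a n :
  (forall j, 0 <= a j) -> ex_series a -> sum_f_R0 a n <= Series a.
Proof.
  intros Ha He; rewrite (Series_incr_n a (S n)) by (auto with arith || lia); simpl pred.
  enough (0 <= Series (fun k => a (S n + k)%nat)) by lra.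
  assert (Hz : Series (fun _ => 0) = 0)
    by exact (is_series_unique _ _ (is_series_finite (fun _ => 0) 0 (fun _ _ => eq_refl))).
  rewrite <- Hz.
  apply Series_le; [intros k; split; [lra | apply Ha] | now apply ex_series_incr_n].
Qed.

Lemma continuity_pt_ball f x0 eps :
  continuity_pt f x0 -> 0 < eps ->
  exists d, 0 < d /\ forall x, Rabs (x - x0) < d -> Rabs (f x - f x0) < eps.
Proof.
  intros Hc Heps; destruct (Hc eps Heps) as [d [Hd H]]; exists d; split; [exact Hd|].
  intros x Hx; destruct (Req_dec x x0) as [->|Hne]; [now rewrite Rminus_diag, Rabs_R0|].
  exact (H x (conj (conj I (not_eq_sym Hne)) Hx)).
Qed.

Lemma continuity_pt_pos_nbhd f x0 :
  continuity_pt f x0 -> 0 < f x0 -> exists d, 0 < d /\ forall x, Rabs (x - x0) < d -> 0 < f x.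
Proof.
  intros Hc Hp; destruct (continuity_pt_ball f x0 (f x0) Hc Hp) as [d [Hd H]].
  exists d; split; [exact Hd|]; intros x Hx.
  specialize (H x Hx); apply Rabs_def2 in H; lra.
Qed.

Lemma continuity_pt_of_ex_derive (f : R -> R) x : ex_derive f x -> continuity_pt f x.
Proof. intros H; apply continuity_pt_filterlim, (ex_derive_continuous f x H). Qed.

(* Polynomials in a variable Z and the series variable T: [peval z t] evaluates at reals,
   [pcoef w] is the coefficient sequence of the power series obtained by substituting the
   series with coefficients [w] for Z. *)
Inductive pexpr : Type :=
  | PZ
  | PT
  | PC (c : R)
  | PAdd (e1 e2 : pexpr)
  | PMul (e1 e2 : pexpr).

Declare Scope pexpr_scope.
Delimit Scope pexpr_scope with P.
Bind Scope pexpr_scope with pexpr.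
Arguments PC c%_R.
Infix "+" := PAdd : pexpr_scope.
Infix "*" := PMul : pexpr_scope.

Fixpoint PPow (e : pexpr) (k : nat) : pexpr :=
  match k with O => PC 1 | S k => e * PPow e k end.
Arguments PPow e%_P k%_nat.
Infix "^" := PPow : pexpr_scope.

Fixpoint peval (z t : R) (e : pexpr) : R :=
  match e with
  | PZ => z
  | PT => t
  | PC c => c
  | PAdd a b => peval z t a + peval z t b
  | PMul a b => peval z t a * peval z t b
  end.

Fixpoint pcoef (w : nat -> R) (e : pexpr) : nat -> R :=
  match e with
  | PZ => w
  | PT => ps_X
  | PC c => ps_const c
  | PAdd a b => PS_plus (pcoef w a) (pcoef w b)
  | PMul a b => PS_mult (pcoef w a) (pcoef w b)
  end.

Lemma pcoef_PPow w e k : pcoef w (e ^ k) = ps_pow (pcoef w e) k.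
Proof. induction k as [|k IH]; simpl; [reflexivity | now rewrite IH]. Qed.

Lemma radius_pcoef (rho : R) w e :
  Rbar_le rho (CV_radius w) -> Rbar_le rho (CV_radius (pcoef w e)).
Proof.
  intros Hw; induction e; simpl.
  - exact Hw.
  - apply (radius_ge_finite _ _ 1); intros [|[|n]] Hn; reflexivity || lia.
  - apply (radius_ge_finite _ _ 0); intros [|n] Hn; reflexivity || lia.
  - now apply radius_ge_plus.
  - now apply radius_ge_mult.
Qed.

Lemma PSeries_pcoef (rho : R) w e x :
  Rbar_le rho (CV_radius w) -> Rabs x < rho ->
  PSeries (pcoef w e) x = peval (PSeries w x) x e.
Proof.
  intros Hw Hx.
  assert (Hin : forall f, Rbar_lt (Rabs x) (CV_radius (pcoef w f)))
    by (intros f; apply (radius_lt rho); auto using radius_pcoef).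
  induction e as [| |c|a IHa b IHb|a IHa b IHb]; simpl.
  - reflexivity.
  - rewrite (PSeries_finite _ 1) by (intros [|[|n]] Hn; reflexivity || lia); simpl; ring.
  - rewrite (PSeries_finite _ 0) by (intros [|n] Hn; reflexivity || lia); simpl; ring.
  - rewrite PSeries_plus by (apply CV_radius_inside, Hin); now rewrite IHa, IHb.
  - rewrite PSeries_mult by apply Hin; now rewrite IHa, IHb.
Qed.

Lemma pcoef_eq_of_peval_eq (rho : R) w e f :
  0 < rho -> Rbar_le rho (CV_radius w) -> (forall z t, peval z t e = peval z t f) ->
  forall n, pcoef w e n = pcoef w f n.
Proof.
  intros Hrho Hw H n.
  assert (Hin : forall g, Rbar_lt 0 (CV_radius (pcoef w g))).
  { intros g; rewrite <- Rabs_R0; apply (radius_lt rho); [apply radius_pcoef, Hw|].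
    now rewrite Rabs_R0. }
  apply PSeries_ext_recip; [apply Hin | apply Hin|].
  exists (mkposreal rho Hrho); intros y Hy.
  change (Rabs (y + - 0) < rho) in Hy; rewrite Ropp_0, Rplus_0_r in Hy.
  now rewrite !(PSeries_pcoef rho).
Qed.

Lemma pcoef_local w w' n :
  (forall j, (j <= n)%nat -> w j = w' j) ->
  forall e m, (m <= n)%nat -> pcoef w e m = pcoef w' e m.
Proof.
  intros H e; induction e as [| | |a IHa b IHb|a IHa b IHb]; intros m Hm; simpl; auto.
  - rewrite !PS_plus_R; now rewrite IHa, IHb.
  - apply PS_mult_local; intros; [apply IHa | apply IHb]; lia.
Qed.

Fixpoint guarded (e : pexpr) : Prop :=
  match e with
  | PZ => False
  | PT | PC _ => True
  | PAdd a b => guarded a /\ guarded b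
  | PMul a b => a = PT \/ guarded a /\ guarded b
  end.

Lemma pcoef_guarded_local w w' n :
  (forall j, (j < n)%nat -> w j = w' j) ->
  forall e m, guarded e -> (m <= n)%nat -> pcoef w e m = pcoef w' e m.
Proof.
  intros H e; induction e as [| | |a IHa b IHb|a IHa b IHb]; intros m Ge Hm; simpl in *;
    try reflexivity.
  - contradiction.
  - rewrite !PS_plus_R; destruct Ge; now rewrite IHa, IHb.
  - destruct Ge as [->|[Ga Gb]].
    + rewrite !PS_mult_X_l; destruct m as [|m]; [reflexivity|].
      apply (pcoef_local _ _ m); [intros j Hj; apply H; lia | lia].
    + apply PS_mult_local; intros; [apply IHa | apply IHb]; auto; lia.
Qed.

Fixpoint nonneg_pexpr (e : pexpr) : Prop :=
  match e with
  | PZ | PT => True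
  | PC c => 0 <= c
  | PAdd a b | PMul a b => nonneg_pexpr a /\ nonneg_pexpr b
  end.

Lemma pcoef_nonneg w e :
  nonneg_pexpr e -> (forall j, 0 <= w j) -> forall n, 0 <= pcoef w e n.
Proof.
  intros He Hw; induction e as [| |c|a IHa b IHb|a IHa b IHb]; intros n; simpl in *.
  - apply Hw.
  - destruct n as [|[|n]]; simpl; lra.
  - destruct n; simpl; lra.
  - destruct He as [Ha Hb]; rewrite PS_plus_R; specialize (IHa Ha n); specialize (IHb Hb n); lra.
  - destruct He; apply PS_mult_nonneg; auto.
Qed.

Lemma peval_nonneg_mono z z' t e :
  nonneg_pexpr e -> 0 <= t -> 0 <= z <= z' -> 0 <= peval z t e <= peval z' t e.
Proof.
  intros He Ht Hz; induction e as [| |c|a IHa b IHb|a IHa b IHb]; simpl in *; try lra.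
  - destruct He as [Ha Hb]; specialize (IHa Ha); specialize (IHb Hb); lra.
  - destruct He as [Ha Hb]; specialize (IHa Ha); specialize (IHb Hb).
    split; [apply Rmult_le_pos | apply Rmult_le_compat]; lra.
Qed.

Lemma peval_guarded_0 z e : guarded e -> peval z 0 e = peval 0 0 e.
Proof.
  induction e as [| | |a IHa b IHb|a IHa b IHb]; simpl; intros Ge; try easy.
  - destruct Ge; now rewrite IHa, IHb.
  - destruct Ge as [->|[Ga Gb]]; simpl; [ring | now rewrite IHa, IHb].
Qed.

Lemma peval_continuity_pt z e t0 : continuity_pt (fun t => peval z t e) t0.
Proof.
  induction e as [| |c|a IHa b IHb|a IHa b IHb]; simpl.
  - apply continuity_pt_const; intros ? ?; reflexivity.
  - apply derivable_continuous_pt, derivable_pt_id.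
  - apply continuity_pt_const; intros ? ?; reflexivity.
  - now apply (continuity_pt_plus (fun t => peval z t a) (fun t => peval z t b)).
  - now apply (continuity_pt_mult (fun t => peval z t a) (fun t => peval z t b)).
Qed.

Section Recurrence.

Variables M N : R.

Definition wcoef (n : nat) : R := acoef M N (S (S n)).

Definition Yexpr : pexpr := PC (a1 M N) + PT * PZ.

Definition Sexpr : pexpr := PC M + PT * Yexpr.

Definition Phi : pexpr :=
  PC N * (PC (3 * M) * Yexpr ^ 2 + PT * Yexpr ^ 3 + PC (4 * M ^ 3) * Yexpr
          + PT * (PC (6 * M ^ 2) * Yexpr ^ 2 + PT * (PC (4 * M) * Yexpr ^ 3)
                  + PT * (PT * Yexpr ^ 4))
          + PC (20 * M ^ 3) * Yexpr ^ 3
          + PT * (PC (15 * M ^ 2) * Yexpr ^ 4 + PT * (PC (6 * M) * Yexpr ^ 5)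
                  + PT * (PT * Yexpr ^ 6)))
  + PC (15 * N * M ^ 4) * (PT * (PZ * PZ)).

Lemma pcoef_Sexpr w n :
  pcoef w Sexpr n = match n with O => M | 1%nat => a1 M N | S (S k) => w k end.
Proof.
  unfold Sexpr, Yexpr; cbn [pcoef]; rewrite PS_plus_R.
  destruct n as [|[|n]]; rewrite PS_mult_X_l; [|rewrite PS_plus_R, PS_mult_X_l|
    rewrite PS_plus_R, PS_mult_X_l]; simpl; ring.
Qed.

Lemma pcoef_Sexpr_trunc n j :
  pcoef (trunc n wcoef) Sexpr j = trunc (S (S n)) (acoef M N) j.
Proof.
  rewrite pcoef_Sexpr; unfold trunc.
  destruct j as [|[|j]]; simpl; [now rewrite acoef_0 | now rewrite acoef_1 | reflexivity].
Qed.

(* At index n + 3, with Z a polynomial of degree < n, the left side is the recurrence for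
   [wcoef n] and every term on the right except T^3 Phi vanishes. *)
Lemma recurrence_identity z t :
  let y := a1 M N in
  peval z t (PC N * (PT * Sexpr ^ 3 + PT * (PT * Sexpr ^ 4) + Sexpr ^ 6)) =
  peval z t (PC (N * M ^ 6) + PT * PC (N * (M ^ 3 + 6 * M ^ 5 * y))
             + PT * (PT * (PC (N * (3 * M ^ 2 * y + M ^ 4 + 15 * M ^ 4 * y ^ 2))
                           + PC (6 * N * M ^ 5) * PZ))
             + PT * (PT * (PT * (PC (N * (3 * M ^ 2 + 30 * M ^ 4 * y)) * PZ + Phi)))).
Proof. simpl; ring. Qed.

Lemma acoef_pcoef n : acoef M N n = pcoef wcoef Sexpr n.
Proof.
  rewrite pcoef_Sexpr; destruct n as [|[|n]]; [apply acoef_0 | apply acoef_1 | reflexivity].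
Qed.

Lemma wcoef_rec n : wcoef n = pcoef (trunc n wcoef) Phi n.
Proof.
  pose proof (pcoef_eq_of_peval_eq 1 (trunc n wcoef) _ _ Rlt_0_1 (radius_trunc 1 n wcoef)
                recurrence_identity (S (S (S n)))) as E.
  cbn [pcoef] in E.
  rewrite !PS_plus_R, !PS_mult_const_l, !PS_mult_X_l_S, !PS_plus_R, !PS_mult_X_l_S in E.
  rewrite !pcoef_PPow, !(ps_pow_ext _ _ (pcoef_Sexpr_trunc n)), !PS_mult_const_l,
    !trunc_ge in E by lia.
  simpl ps_const in E.
  unfold wcoef at 1; rewrite acoef_S; lra.
Qed.

Lemma guarded_Phi : guarded Phi.
Proof. simpl; tauto. Qed.

Lemma wcoef_pcoef_trunc m n : (n <= m)%nat -> wcoef n = pcoef (trunc m wcoef) Phi n.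
Proof.
  intros Hnm; rewrite wcoef_rec; apply (pcoef_guarded_local _ _ n); auto using guarded_Phi.
  intros j Hj; now rewrite !trunc_lt by lia.
Qed.

Lemma wcoef_fix n : wcoef n = pcoef wcoef Phi n.
Proof.
  rewrite wcoef_rec; apply (pcoef_guarded_local _ _ n); auto using guarded_Phi.
  intros j Hj; now apply trunc_lt.
Qed.

Hypotheses (HM : 0 < M) (HN : 0 < N).

Lemma nonneg_Phi : nonneg_pexpr Phi.
Proof.
  unfold a1; simpl; repeat split; repeat apply Rmult_le_pos; try apply pow_le; lra.
Qed.

Lemma wcoef_nonneg n : 0 <= wcoef n.
Proof.
  induction n as [n IH] using (well_founded_induction lt_wf).
  rewrite wcoef_rec; apply (pcoef_nonneg _ _ nonneg_Phi); intros j.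
  unfold trunc; destruct (Nat.ltb_spec j n); [now apply IH | lra].
Qed.

Lemma partial_sum_wcoef_le T n :
  0 <= T -> sum_f_R0 (fun j => wcoef j * T ^ j) n <= peval (PSeries (trunc n wcoef) T) T Phi.
Proof.
  intros HT; rewrite <- (PSeries_pcoef (T + 1))
    by (apply radius_trunc || (rewrite Rabs_pos_eq; lra)).
  rewrite (sum_eq _ (fun j => pcoef (trunc n wcoef) Phi j * T ^ j))
    by (intros j Hj; now rewrite (wcoef_pcoef_trunc n j Hj)).
  apply partial_sum_le_Series.
  - intros j; apply Rmult_le_pos; [|now apply pow_le].
    apply (pcoef_nonneg _ _ nonneg_Phi); intros i; now apply trunc_nonneg, wcoef_nonneg.
  - apply ex_pseries_R, CV_radius_inside, (radius_lt (T + 1)); [apply radius_pcoef, radius_trunc|].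
    rewrite Rabs_pos_eq; lra.
Qed.

Lemma partial_sum_wcoef_bounded T Wb :
  0 <= T -> 0 <= Wb -> peval Wb T Phi <= Wb ->
  forall n, sum_f_R0 (fun j => wcoef j * T ^ j) n <= Wb.
Proof.
  intros HT HWb HPhi n.
  induction n as [|n IH]; (eapply Rle_trans; [apply partial_sum_wcoef_le, HT|]);
    (eapply Rle_trans; [apply (peval_nonneg_mono _ Wb _ _ nonneg_Phi HT) | exact HPhi]).
  - rewrite (PSeries_finite _ 0) by (intros j Hj; apply trunc_ge; lia); simpl.
    rewrite trunc_ge by lia; lra.
  - rewrite PSeries_trunc; split; [|exact IH].
    apply cond_pos_sum; intros j; apply Rmult_le_pos; [apply wcoef_nonneg | now apply pow_le].
Qed.

Lemma radius_wcoef : exists T, 0 < T /\ Rbar_le T (CV_radius wcoef).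
Proof.
  (* Phi(0, z) does not depend on z, so for small T the map z |-> Phi(T, z) sends [0, Wb]
     into itself. *)
  set (Wb := peval 0 0 Phi + 1).
  assert (HWb : 0 < Wb).
  { pose proof (peval_nonneg_mono 0 0 0 Phi nonneg_Phi) as H0; unfold Wb; lra. }
  destruct (continuity_pt_ball (fun t => peval Wb t Phi) 0 1) as [d [Hd Hsmall]];
    [apply peval_continuity_pt | lra |].
  set (T := d / 2); assert (HT : 0 < T) by (unfold T; lra).
  assert (HPhiT : peval Wb T Phi <= Wb).
  { specialize (Hsmall T); rewrite Rminus_0_r, Rabs_pos_eq in Hsmall by lra.
    specialize (Hsmall ltac:(unfold T; lra)).
    rewrite peval_guarded_0 in Hsmall by apply guarded_Phi.
    apply Rabs_def2 in Hsmall; unfold Wb at 2; lra. }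
  pose proof (partial_sum_wcoef_bounded T Wb ltac:(lra) ltac:(lra) HPhiT) as Hbound.
  exists T; split; [exact HT|].
  apply (proj1 (CV_radius_bounded wcoef)); exists Wb; intros n.
  assert (Hterm : forall j, 0 <= wcoef j * T ^ j)
    by (intros j; apply Rmult_le_pos; [apply wcoef_nonneg | apply pow_le; lra]).
  rewrite Rabs_pos_eq by apply Hterm.
  eapply Rle_trans; [|apply (Hbound n)].
  destruct n as [|n]; simpl; [lra|].
  pose proof (cond_pos_sum _ n Hterm); lra.
Qed.

End Recurrence.

Lemma local_inverse_of_left_inverse (S g : R -> R) r :
  0 < r ->
  (forall t, Rabs t < r -> continuity_pt S t) ->
  (forall t, Rabs t < r -> g (S t) = t) ->
  (forall t, Rabs t < r -> t <> 0 -> 0 < t * (S t - S 0)) ->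
  exists d, 0 < d /\
    (forall a, Rabs (a - S 0) < d -> Rabs (g a) < r /\ S (g a) = a) /\
    exists e, 0 < e /\ forall t, Rabs t < e -> Rabs t < r /\ Rabs (S t - S 0) < d.
Proof.
  intros Hr Hc Hg Hsign.
  assert (Hhalf : Rabs (r / 2) < r /\ Rabs (- (r / 2)) < r)
    by (rewrite Rabs_Ropp, Rabs_pos_eq; lra).
  pose proof (Hsign (r / 2) (proj1 Hhalf) ltac:(lra)) as Hup.
  pose proof (Hsign (- (r / 2)) (proj2 Hhalf) ltac:(lra)) as Hdown.
  set (d := Rmin (S (r / 2) - S 0) (S 0 - S (- (r / 2)))).
  assert (Hd : 0 < d) by (apply Rmin_pos; nra).
  assert (Hd1 : d <= S (r / 2) - S 0) by apply Rmin_l.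
  assert (Hd2 : d <= S 0 - S (- (r / 2))) by apply Rmin_r.
  exists d; split; [exact Hd | split].
  - intros a Ha; apply Rabs_def2 in Ha.
    destruct (Ranalysis5.IVT_interv (fun t => S t - a) (- (r / 2)) (r / 2)) as [t [Ht Hta]];
      [| lra | simpl; lra | simpl; lra |].
    { intros t Ht; apply continuity_pt_minus; [apply Hc, Rabs_def1; lra|].
      apply continuity_pt_const; intros ? ?; reflexivity. }
    assert (Hat : S t = a) by (simpl in Hta; lra).
    rewrite <- Hat, Hg by (apply Rabs_def1; lra); split; [apply Rabs_def1; lra | reflexivity].
  - destruct (continuity_pt_ball S 0 d (Hc 0 ltac:(rewrite Rabs_R0; lra)) Hd) as [e [He H]].
    exists (Rmin e r); split; [now apply Rmin_pos|].
    intros t Ht; split; [eapply Rlt_le_trans; [exact Ht | apply Rmin_r]|].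
    apply H; rewrite Rminus_0_r; eapply Rlt_le_trans; [exact Ht | apply Rmin_l].
Qed.

Definition qfun (M a : R) : R :=
  a ^ 4 + 2 * a ^ 3 * M + 3 * a ^ 2 * M ^ 2 + 4 * a * M ^ 3 + 5 * M ^ 4.

Lemma quadratic_identity M N z t :
  let Y := a1 M N + t * z in
  let a := M + t * Y in
  t * (peval z t (Phi M N) - z) =
  a ^ 4 * N + 15 * M ^ 12 * N ^ 3 - Y * pfun M N a + N * Y ^ 2 * qfun M a.
Proof. intros Y a; unfold a, Y, pfun, qfun; simpl; unfold a1; ring. Qed.

Lemma tfun_eq_of_root M N t Y :
  0 < M -> 0 < N ->
  let a := M + t * Y in
  a ^ 4 * N + 15 * M ^ 12 * N ^ 3 - Y * pfun M N a + N * Y ^ 2 * qfun M a = 0 ->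
  0 < pfun M N a - 2 * N * qfun M a * Y ->
  tfun M N a = t.
Proof.
  intros HM HN a Hroot Hpos; unfold tfun; fold a; fold (qfun M a).
  set (P := pfun M N a) in *; set (Q := qfun M a) in *.
  set (D := a ^ 4 * N + 15 * M ^ 12 * N ^ 3) in *.
  assert (HD : 0 < D).
  { assert (0 <= a ^ 4) by (replace (a ^ 4) with ((a * a) * (a * a)) by ring; nra).
    pose proof (pow_lt M 12 HM); pose proof (pow_lt N 3 HN); unfold D; nra. }
  assert (Hdisc : P ^ 2 - 4 * N ^ 2 * (a ^ 4 + 15 * M ^ 12 * N ^ 2) * Q = (P - 2 * N * Q * Y) ^ 2).
  { transitivity ((P - 2 * N * Q * Y) ^ 2 - 4 * N * Q * (D - Y * P + N * Y ^ 2 * Q));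
      [unfold D; ring | rewrite Hroot; ring]. }
  rewrite Hdisc, sqrt_pow2 by lra.
  replace (2 * (a ^ 4 * N + 15 * M ^ 12 * N ^ 3)) with (2 * D) by reflexivity.
  replace (a - M) with (t * Y) by (unfold a; ring).
  assert (HDY : D = Y * (P - N * Q * Y)) by lra.
  rewrite HDY in HD |- *; field; split; intros E; rewrite E in HD; lra.
Qed.

Section Analytic.

Variables (M N T : R).
Hypothesis HT : Rbar_le T (CV_radius (wcoef M N)).

Lemma PSeries_acoef t :
  Rabs t < T -> PSeries (acoef M N) t = M + t * (a1 M N + t * PSeries (wcoef M N) t).
Proof.
  intros Ht; rewrite (PSeries_ext _ _ t (acoef_pcoef M N)).
  now rewrite (PSeries_pcoef T).
Qed.

Lemma PSeries_wcoef_fix t :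
  Rabs t < T -> peval (PSeries (wcoef M N) t) t (Phi M N) = PSeries (wcoef M N) t.
Proof.
  intros Ht; rewrite <- (PSeries_pcoef T) by assumption.
  apply PSeries_ext; intros n; symmetry; apply wcoef_fix.
Qed.

End Analytic.

Lemma tfun_PSeries_acoef M N :
  0 < M -> 0 < N ->
  exists r, 0 < r /\ Rbar_le r (CV_radius (acoef M N)) /\
    forall t, Rabs t < r ->
      tfun M N (PSeries (acoef M N) t) = t /\ (t <> 0 -> 0 < t * (PSeries (acoef M N) t - M)).
Proof.
  intros HM HN.
  destruct (radius_wcoef M N HM HN) as [T [HT Hrad]].
  set (W := PSeries (wcoef M N)).
  assert (HdW : ex_derive W 0)
    by (apply ex_derive_PSeries, (radius_lt T); [exact Hrad | rewrite Rabs_R0; lra]).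
  set (Y := fun t => a1 M N + t * W t).
  set (h := fun t => pfun M N (M + t * Y t) - 2 * N * qfun M (M + t * Y t) * Y t).
  assert (HY0 : 0 < Y 0) by (unfold Y, a1; pose proof (pow_lt M 4 HM); nra).
  assert (Hh0 : h 0 = 1) by (unfold h, Y, pfun, qfun, a1; ring).
  destruct (continuity_pt_pos_nbhd Y 0) as [dY [HdY HY]]; [|exact HY0|].
  { apply continuity_pt_of_ex_derive; unfold Y; auto_derive; auto. }
  destruct (continuity_pt_pos_nbhd h 0) as [dh [Hdh Hh]]; [|lra|].
  { apply continuity_pt_of_ex_derive; unfold h, Y, pfun, qfun; auto_derive.
    repeat split; auto. }
  set (r := Rmin T (Rmin dY dh)).
  assert (HrT : r <= T) by apply Rmin_l.
  assert (HrY : r <= dY) by (eapply Rle_trans; [apply Rmin_r | apply Rmin_l]).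
  assert (Hrh : r <= dh) by (eapply Rle_trans; [apply Rmin_r | apply Rmin_r]).
  exists r; split; [repeat apply Rmin_pos; lra | split].
  - rewrite (CV_radius_ext _ _ (acoef_pcoef M N)); apply radius_pcoef.
    exact (Rbar_le_trans r T _ HrT Hrad).
  - intros t Ht.
    assert (HtT : Rabs t < T) by lra.
    assert (HYt : 0 < Y t) by (apply HY; rewrite Rminus_0_r; lra).
    assert (Hht : 0 < h t) by (apply Hh; rewrite Rminus_0_r; lra).
    rewrite (PSeries_acoef M N T Hrad t HtT); fold W; fold (Y t); split.
    + apply tfun_eq_of_root; auto.
      pose proof (PSeries_wcoef_fix M N T Hrad t HtT) as Hfix; fold W in Hfix.
      unfold Y; rewrite <- quadratic_identity, Hfix; ring.
    + intros Ht0; replace (t * (M + t * Y t - M)) with (t * t * Y t) by ring.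
      apply Rmult_lt_0_compat; [|exact HYt].
      destruct (Rlt_or_le 0 t); nra.
Qed.

Theorem lemma8 (M N : R) (hM : 0 < M) (hN : 0 < N) :
  exists r, 0 < r /\
    (forall t, Rabs t < r -> ex_pseries (acoef M N) t) /\
    exists d, 0 < d /\
      (forall a, Rabs (a - M) < d ->
         Rabs (tfun M N a) < r /\ PSeries (acoef M N) (tfun M N a) = a) /\
      exists e, 0 < e /\
        (forall t, Rabs t < e ->
           Rabs t < r /\ Rabs (PSeries (acoef M N) t - M) < d /\
           tfun M N (PSeries (acoef M N) t) = t).
Proof.
  destruct (tfun_PSeries_acoef M N hM hN) as [r [Hr [Hrad Hinv]]].
  assert (HS0 : PSeries (acoef M N) 0 = M) by now rewrite PSeries_0, acoef_0.
  destruct (local_inverse_of_left_inverse (PSeries (acoef M N)) (tfun M N) r Hr)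
    as [d [Hd [Hleft [e [He Hright]]]]].
  - intros t Ht; now apply PSeries_continuity, (radius_lt r).
  - intros t Ht; now apply Hinv.
  - intros t Ht; rewrite HS0; now apply Hinv.
  - rewrite HS0 in Hleft, Hright.
    exists r; split; [exact Hr | split].
    + intros t Ht; now apply CV_radius_inside, (radius_lt r).
    + exists d; split; [exact Hd | split; [exact Hleft|]].
      exists e; split; [exact He|]; intros t Ht.
      destruct (Hright t Ht) as [Htr Hd']; repeat split; auto; now apply Hinv.
Qed.
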